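(* Let $\mathcal{E}=\{n\ge 1: e(n)=e(n+1)\}$. (1) The set $\mathcal{E}$ is infinite. If $m\in\mathcal{E}$, then $n=4m+1$ satisfies $e(n)=e(n+1)=e(n+2)$. Conversely, if $n\ge 1$ satisfies $e(n)=e(n+1)=e(n+2)$, then $n=4m+1$ for some integer $m\in\mathcal{E}$. (2) There is no integer $n\ge 1$ with $e(n)=e(n+1)=e(n+2)=e(n+3)$.
   Context: The Stern polynomials $B_n(t)\in\mathbb{Z}[t]$, $n\ge 0$, are defined by $B_0(t)=0$, $B_1(t)=1$, $B_{2n}(t)=tB_n(t)$ and $B_{2n+1}(t)=B_n(t)+B_{n+1}(t)$ for $n\ge 1$. For $n\ge 1$, $e(n)=\deg_t B_n(t)$. *)

From mathcomp Require Import all_boot all_order all_algebra.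
Set Implicit Arguments. Unset Strict Implicit. Unset Printing Implicit Defensive.
Import GRing.Theory.
Local Open Scope ring_scope.

(* Stern polynomials B_n(t) in Z[t], computed with fuel (fuel n suffices). *)
Fixpoint stern_aux (fuel : nat) (n : nat) : {poly int} :=
  match fuel with
  | 0%N => 0
  | k.+1 =>
    if n == 0%N then 0
    else if n == 1%N then 1
    else if ~~ odd n then 'X * stern_aux k n./2
    else stern_aux k n./2 + stern_aux k (n./2).+1
  end.

Definition stern (n : nat) : {poly int} := stern_aux n n.

Lemma stern_spec_check :
  stern 0 = 0 /\ stern 1 = 1.
Proof. by split. Qed.

(* e(n) = deg_t B_n(t) for n >= 1 (size = degree + 1). *)
Definition e (n : nat) : nat := (size (stern n)).-1.

Definition in_Eset (n : nat) : Prop := (1 <= n)%N /\ e n = e n.+1.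

From mathcomp Require Import all_boot all_order all_algebra zify.
Import GRing.Theory.

(* The degree sequence e(n) of the Stern polynomials obeys
     e(2k) = e(k) + 1   and   e(2k+1) = max(e(k), e(k+1))       (k >= 1):
   the first because B_{2k} = t B_k, the second because B_k and B_{k+1} have
   nonnegative coefficients, so no cancellation occurs in B_k + B_{k+1}.
   From these two recurrences, by induction along the binary expansion,
   consecutive degrees differ by at most one.  Iterating the recurrences
   twice expresses e(4j), ..., e(4j+4) through e(j) and e(j+1); together
   with |e(j+1) - e(j)| <= 1 this reduces every claim of the theorem to
   linear arithmetic on e(j), e(j+1) after splitting n according to n mod 4:
   three equal consecutive degrees start exactly at n = 4m+1 with m in E,
   and since n and n+1 cannot both be 1 mod 4, four cannot occur.  Finally
   2 is in E and m in E gives 4m+1 in E, so E is infinite. *)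

Lemma pos_half_ind (P : nat -> Prop) :
  P 1 ->
  (forall k, 0 < k -> P k -> P (2 * k)) ->
  (forall k, 0 < k -> P k -> P k.+1 -> P (2 * k).+1) ->
  forall n, 0 < n -> P n.
Proof.
move=> P1 Peven Podd; elim/ltn_ind=> n IH n_gt0.
have := odd_double_half n; rewrite -mul2n.
case: (odd n) => /= def_n; last first.
  by rewrite -def_n; apply: Peven; [lia | apply: IH; lia].
have [n1 | half_gt0] := eqVneq n./2 0; first by rewrite -def_n n1.
rewrite -def_n; apply: Podd; [lia | apply: IH; lia | apply: IH; lia].
Qed.

Lemma stern_aux_fuel k1 k2 n :
  n <= k1 -> n <= k2 -> stern_aux k1 n = stern_aux k2 n.
Proof.
elim: k1 k2 n => [|k1 IH] [|k2] n le_n1 le_n2 //; try by have -> : n = 0 by lia.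
have := odd_double_half n; rewrite -mul2n /= => def_n.
case: eqP => // n_neq0; case: eqP => // n_neq1.
by case: (odd n) def_n => /= def_n; congr (_ _ _); apply: IH; lia.
Qed.

Lemma stern_aux_succ k n : stern_aux k.+1 n =
  if n == 0 then 0%R
  else if n == 1 then 1%R
  else if ~~ odd n then ('X * stern_aux k n./2)%R
  else (stern_aux k n./2 + stern_aux k n./2.+1)%R.
Proof. by []. Qed.

Lemma stern_double k : 0 < k -> stern (2 * k) = ('X * stern k)%R.
Proof.
move=> k_gt0; rewrite /stern -[X in stern_aux X _](@prednK (2 * k)); last lia.
rewrite stern_aux_succ oddM mul2n doubleK /=.
have [|_] := eqVneq (k.*2) 0; first lia.
have [|_] := eqVneq (k.*2) 1; first lia.
by congr (_ * _)%R; apply: stern_aux_fuel; lia.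
Qed.

Lemma stern_double_add1 k : 0 < k ->
  stern (2 * k).+1 = (stern k + stern k.+1)%R.
Proof.
move=> k_gt0; rewrite {1}/stern stern_aux_succ /= oddM mul2n.
rewrite uphalf_half odd_double doubleK /=.
have [|_] := eqVneq (k.*2.+1) 1; first lia.
by congr (_ + _)%R; apply: stern_aux_fuel; lia.
Qed.

Definition nonneg_coefs (p : {poly int}) : Prop := forall i, (0 <= p`_i)%R.

(* Adding polynomials with nonnegative coefficients cannot cancel the
   leading term, so the size of the sum is the larger of the two sizes. *)
Lemma size_add_nonneg p q : nonneg_coefs p -> nonneg_coefs q ->
  size (p + q)%R = maxn (size p) (size q).
Proof.
wlog le_qp : p q / size q <= size p => [wlog_hyp p_ge0 q_ge0|].
  case/orP: (leq_total (size q) (size p)) => [le_qp | le_pq].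
    exact: wlog_hyp le_qp p_ge0 q_ge0.
  by rewrite addrC maxnC; exact: wlog_hyp le_pq q_ge0 p_ge0.
move=> p_ge0 q_ge0; rewrite (maxn_idPl le_qp).
apply/anti_leq/andP; split.
  by rewrite (leq_trans (size_polyD _ _)) ?geq_max ?leqnn.
case def_sp: (size p) => [//|s].
have lead_neq0 : (p`_s != 0)%R.
  have : lead_coef p != 0%R by rewrite lead_coef_eq0 -size_poly_eq0 def_sp.
  by rewrite lead_coefE def_sp.
have : ((p + q)`_s != 0)%R.
  by rewrite coefD; move: (p_ge0 s) (q_ge0 s) lead_neq0; lia.
by apply: contraR; rewrite -leqNgt => le_sum; rewrite nth_default.
Qed.

Lemma stern_nonneg_neq0 {n} : 0 < n -> nonneg_coefs (stern n) /\ stern n != 0%R.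
Proof.
move: n; apply: pos_half_ind
  => [|k k_gt0 [ge0 neq0]|k k_gt0 [ge0 neq0] [ge0' neq0']].
- by split; [move=> i; rewrite coefC; case: (i == 0) | rewrite oner_eq0].
- rewrite stern_double //; split.
    by move=> i; rewrite coefXM; case: (i == 0).
  by rewrite mulrC -size_poly_eq0 size_mulX.
- rewrite stern_double_add1 //; split.
    by move=> i; rewrite coefD; move: (ge0 i) (ge0' i); lia.
  rewrite -size_poly_eq0 size_add_nonneg // -lt0n.
  by rewrite leq_max !size_poly_gt0 neq0.
Qed.

Lemma e_double {k} : 0 < k -> e (2 * k) = (e k).+1.
Proof.
move=> k_gt0; have [_ neq0] := stern_nonneg_neq0 k_gt0.
by rewrite /e stern_double // mulrC size_mulX //= prednK // size_poly_gt0.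
Qed.

Lemma e_double_add1 {k} : 0 < k -> e (2 * k).+1 = maxn (e k) (e k.+1).
Proof.
move=> k_gt0; have [ge0 neq0] := stern_nonneg_neq0 k_gt0.
have [ge0' neq0'] := stern_nonneg_neq0 (ltn0Sn k).
rewrite /e stern_double_add1 // size_add_nonneg //.
by move: neq0 neq0'; rewrite -!size_poly_eq0; lia.
Qed.

Lemma e1 : e 1 = 0. Proof. by rewrite /e /stern /= size_poly1. Qed.
Lemma e2 : e 2 = 1. Proof. by rewrite (@e_double 1 isT) e1. Qed.
Lemma e3 : e 3 = 1. Proof. by rewrite (@e_double_add1 1 isT) e1 e2. Qed.
Lemma e4 : e 4 = 2. Proof. by rewrite (@e_double 2 isT) e2. Qed.

Lemma e_succ_bound {k} : 0 < k -> e k <= (e k.+1).+1 /\ e k.+1 <= (e k).+1.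
Proof.
move: k; apply: pos_half_ind => [|k k_gt0 [b1 b2]|k k_gt0 [b1 b2] _].
- by rewrite e1 e2.
- by rewrite e_double_add1 // e_double //; lia.
- have -> : (2 * k).+2 = 2 * k.+1 by lia.
  by rewrite e_double_add1 // e_double //; lia.
Qed.

Lemma e_block4 {j} : 0 < j ->
  [/\ e (4 * j) = (e j).+2,
      e (4 * j).+1 = maxn (e j).+1 (e j.+1),
      e (4 * j).+2 = (maxn (e j) (e j.+1)).+1,
      e (4 * j).+3 = maxn (e j) (e j.+1).+1
    & e (4 * j).+4 = (e j.+1).+2].
Proof.
move=> j_gt0; have [b1 b2] := e_succ_bound j_gt0.
have two_j_gt0 : 0 < 2 * j by lia.
have e_2j := e_double j_gt0; have e_2j1 := e_double_add1 j_gt0.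
have e_2j2 : e (2 * j).+2 = (e j.+1).+1.
  by rewrite (_ : (2 * j).+2 = 2 * j.+1) ?e_double; lia.
have -> : 4 * j = 2 * (2 * j) by lia.
split.
- by rewrite e_double // e_2j.
- by rewrite e_double_add1 // e_2j e_2j1; lia.
- by rewrite (_ : (2 * (2 * j)).+2 = 2 * (2 * j).+1) ?e_double ?e_2j1; lia.
- rewrite (_ : (2 * (2 * j)).+3 = (2 * (2 * j).+1).+1); last lia.
  by rewrite e_double_add1 // e_2j1 e_2j2; lia.
- by rewrite (_ : (2 * (2 * j)).+4 = 2 * (2 * j).+2) ?e_double ?e_2j2; lia.
Qed.

Lemma Eset_triple {m} : in_Eset m ->
  e (4 * m).+1 = e (4 * m).+2 /\ e (4 * m).+2 = e (4 * m).+3.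
Proof.
move=> [m_gt0 e_eq]; have [_ E1 E2 E3 _] := e_block4 m_gt0.
by rewrite E1 E2 E3 e_eq; lia.
Qed.

(* E is closed under m |-> 4m+1, since e(4m+1) = e(4m+2) for m in E. *)
Lemma Eset_step {m} : in_Eset m -> in_Eset (4 * m).+1.
Proof. by move=> Em; have [eq1 _] := Eset_triple Em; split. Qed.

Lemma triple_Eset {n} : 0 < n -> e n = e n.+1 -> e n.+1 = e n.+2 ->
  exists m, n = (4 * m).+1 /\ in_Eset m.
Proof.
move=> n_gt0; rewrite (divn_eq n 4) mulnC.
have := ltn_pmod n (isT : 0 < 4); set r := n %% 4; set j := n %/ 4.
have [-> | j_gt0] := posnP j.
  (* n in {1, 2, 3}: check the small degrees directly. *)
  by move: n_gt0; rewrite /r /j; case: (n %% 4) => [|[|[|[|]]]] //= _ _;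
     rewrite ?e1 ?e2 ?e3 ?e4.
have [E0 E1 E2 E3 E4] := e_block4 j_gt0; have [b1 b2] := e_succ_bound j_gt0.
case: r => [|[|[|[|r]]]] // _; rewrite ?addn0 ?addn1 ?addn2 ?addn3.
- by rewrite E0 E1 E2; lia.
- by rewrite E1 E2 E3 => eq1 eq2; exists j; split=> //; split=> //; lia.
- by rewrite E2 E3 E4; lia.
- by rewrite E3 E4; lia.
Qed.

Theorem theorem4p6 :
  (* (1a) E is infinite *)
  (forall N : nat, exists m : nat, (N <= m)%N /\ in_Eset m) /\
  (* (1b) m in E  ->  n = 4m+1 has e(n) = e(n+1) = e(n+2) *)
  (forall m : nat, in_Eset m ->
     e (4 * m + 1) = e (4 * m + 2) /\ e (4 * m + 2) = e (4 * m + 3)) /\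
  (* (1c) converse *)
  (forall n : nat, (1 <= n)%N -> e n = e n.+1 -> e n.+1 = e n.+2 ->
     exists m : nat, n = (4 * m + 1)%N /\ in_Eset m) /\
  (* (2) no four consecutive equal degrees *)
  (forall n : nat, (1 <= n)%N ->
     ~ (e n = e n.+1 /\ e n.+1 = e n.+2 /\ e n.+2 = e n.+3)).
Proof.
split; [|split; [|split]].
- elim=> [|N [m [le_Nm Em]]]; first by exists 2; rewrite /in_Eset e2 e3.
  by exists (4 * m).+1; split; [lia | exact: Eset_step].
- by move=> m; rewrite addn1 addn2 addn3; exact: Eset_triple.
- move=> n n_gt0 eq1 eq2; have [m [def_n Em]] := triple_Eset n_gt0 eq1 eq2.
  by exists m; rewrite addn1.
- move=> n n_gt0 [eq1 [eq2 eq3]].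
  have [m [def_n _]] := triple_Eset n_gt0 eq1 eq2.
  have [m' [def_n' _]] := triple_Eset (ltn0Sn n) eq2 eq3.
  lia.
Qed.
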